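(* For any positive integers $m$ and $s_1,\ldots,s_m$ there is a constant $c=c(s_1,\ldots,s_m)$ such that the following holds: if $n=p_1^{s_1}\cdots p_m^{s_m}$ with primes $p_1<p_2<\cdots<p_m$ and $p_1>c$, then the $n\times n$ square has no perfect Mondrian partition.
   Context: A Mondrian partition of an $n\times n$ square ($n$ a positive integer) is a dissection of the square into $k\ge 2$ non-overlapping rectangles with positive integer side lengths which are pairwise non-congruent (rectangles of dimensions $a\times b$ and $b\times a$ count as congruent). It is perfect if all its rectangles have the same area (i.e., its defect, the difference between the largest and smallest areas, is $0$). *)

From mathcomp Require Import all_boot.
Set Implicit Arguments. Unset Strict Implicit. Unset Printing Implicit Defensive.

Record rect := Rect { rx : nat; ry : nat; rw : nat; rh : nat }.

(* The unit cell [i,i+1] x [j,j+1] lies inside the rectangle r. *)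
Definition cell_in (r : rect) (i j : nat) : bool :=
  (rx r <= i < rx r + rw r) && (ry r <= j < ry r + rh r).

Definition area (r : rect) : nat := rw r * rh r.

Definition congruent (r1 r2 : rect) : bool :=
  ((rw r1 == rw r2) && (rh r1 == rh r2)) || ((rw r1 == rh r2) && (rh r1 == rw r2)).

(* A dissection of the n x n square [0,n]^2 into the k rectangles R t:
   each rectangle has positive integer sides and lies in the square, and
   every unit cell of the square is covered by exactly one rectangle
   (so interiors are disjoint and the union is the whole square). *)
Definition dissection (n k : nat) (R : 'I_k -> rect) : Prop :=
  (forall t, 0 < rw (R t) /\ 0 < rh (R t) /\
             rx (R t) + rw (R t) <= n /\ ry (R t) + rh (R t) <= n) /\
  (forall i j, i < n -> j < n -> #|[set t | cell_in (R t) i j]| = 1).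

Definition mondrian_partition (n k : nat) (R : 'I_k -> rect) : Prop :=
  2 <= k /\ dissection n R /\
  (forall t u : 'I_k, t != u -> ~~ congruent (R t) (R u)).

Definition perfect_mondrian (n k : nat) (R : 'I_k -> rect) : Prop :=
  mondrian_partition n R /\ (forall t u : 'I_k, area (R t) = area (R u)).

Definition has_perfect_mondrian (n : nat) : Prop :=
  exists (k : nat) (R : 'I_k -> rect), perfect_mondrian n R.

From mathcomp Require Import all_boot zify.
Set Implicit Arguments. Unset Strict Implicit. Unset Printing Implicit Defensive.

(* In a perfect Mondrian partition of the n x n square into k
   rectangles of common area A we have k * A = n^2 (the areas add up to the
   area of the square), so every width divides n^2.  Two pieces with the same
   width and the same area are congruent, hence the k widths are pairwise
   distinct divisors of n^2.  When n = p_1^s_1 ... p_m^s_m, a divisor of n^2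
   is determined by its m valuations at the p_i, each at most 2T where
   T = s_1 + ... + s_m, so k <= (2T+1)^m.  On the other hand k >= 2 divides
   n^2, so the least prime factor of k is one of the p_i and k >= p_1.
   Taking c = (2T+1)^m, the hypothesis p_1 > c is contradictory. *)

Lemma count_interval a w n :
  \sum_(i < n) ((a <= i) && (i < a + w)) = minn (n - a) w.
Proof.
elim: n => [|n IH]; first by rewrite big_ord0; lia.
rewrite big_ord_recr /= IH.
by case: (leqP a n) => Ha; case: (ltnP n (a + w)) => Hb /=; lia.
Qed.

Lemma area_cell_count r n : rx r + rw r <= n -> ry r + rh r <= n ->
  area r = \sum_(i < n) \sum_(j < n) cell_in r i j.
Proof.
move=> in_x in_y.
have cell_prod i j : (cell_in r i j : nat) =
    ((rx r <= i) && (i < rx r + rw r)) * ((ry r <= j) && (j < ry r + rh r)).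
  by rewrite mulnb.
under eq_bigr => i _ do under eq_bigr => j _ do rewrite cell_prod.
under eq_bigr => i _ do rewrite -big_distrr /=.
by rewrite -big_distrl /= !count_interval /area; lia.
Qed.

Lemma dissection_area_sum n k (R : 'I_k -> rect) : dissection n R ->
  \sum_(t < k) area (R t) = n * n.
Proof.
move=> [inside cover].
rewrite (eq_bigr (fun t => \sum_(i < n) \sum_(j < n) cell_in (R t) i j));
  last by move=> t _; have [_ [_ [? ?]]] := inside t; apply: area_cell_count.
rewrite exchange_big /= (eq_bigr (fun i : 'I_n => n)).
  by rewrite sum_nat_const card_ord.
move=> i _; rewrite exchange_big /= (eq_bigr (fun j : 'I_n => 1)).
  by rewrite sum_nat_const card_ord muln1.
move=> j _.
rewrite -(cover i j (ltn_ord i) (ltn_ord j)) cardsE -sum1_card [RHS]big_mkcond /=.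
by apply: eq_bigr => t _; rewrite /cell_in unfold_in /=; case: ifP.
Qed.

Section PerfectPartition.

Variables (n k : nat) (R : 'I_k -> rect).
Hypothesis perfectR : perfect_mondrian n R.

Lemma perfect_divides_square :
  k %| n * n /\ forall t, rw (R t) %| n * n.
Proof.
have [[k_ge2 [D _]] same_area] := perfectR.
pose t0 := Ordinal (ltnW k_ge2).
have kA : n * n = k * area (R t0).
  rewrite -(dissection_area_sum D) (eq_bigr (fun _ => area (R t0))).
    by rewrite sum_nat_const card_ord.
  by move=> t _; rewrite (same_area t0 t).
split=> [|t]; rewrite kA; first exact: dvdn_mulr.
by rewrite (same_area t0 t) /area; apply/dvdn_mull/dvdn_mulr.
Qed.

(* Equal widths and equal areas force congruence, so the widths are distinct. *)
Lemma perfect_widths_inj : injective (fun t => rw (R t)).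
Proof.
have [[_ [[inside _] noncong]] same_area] := perfectR.
move=> t u /= eq_w.
have eq_h : rh (R t) = rh (R u).
  have := same_area t u; rewrite /area eq_w => /eqP.
  by rewrite eqn_pmul2l ?(inside u).1 // => /eqP.
by apply/eqP; apply: contraT => /noncong; rewrite /congruent eq_w eq_h !eqxx.
Qed.

End PerfectPartition.

Lemma logn_prod_pow m (p s : 'I_m -> nat) q : (forall i, prime (p i)) ->
  0 < \prod_(i < m) p i ^ s i /\
  logn q (\prod_(i < m) p i ^ s i) = \sum_(i < m) s i * (q == p i).
Proof.
move=> p_pr.
apply: (big_rec2 (fun x y => 0 < y /\ logn q y = x)); first by rewrite logn1.
move=> i x y _ [y_gt0 logy]; have p_gt0 := prime_gt0 (p_pr i).
split; first by rewrite muln_gt0 expn_gt0 p_gt0 y_gt0.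
by rewrite lognM ?expn_gt0 ?p_gt0 // lognX logn_prime // logy.
Qed.

Section PrimeSupport.

Variables (m E N : nat) (p : 'I_m -> nat).
Hypothesis N_gt0 : 0 < N.
Hypothesis logN_le : forall q, logn q N <= E.
Hypothesis support : forall q, (forall i, q != p i) -> logn q N = 0.

(* A divisor of N is determined by its valuations at the p_i, each at most
   E, so N has at most (E+1)^m pairwise distinct divisors. *)
Lemma distinct_divisors_bound k (f : 'I_k -> nat) :
  injective f -> (forall t, f t %| N) -> k <= E.+1 ^ m.
Proof.
move=> f_inj f_dvd.
have f_gt0 t : 0 < f t by apply: dvdn_gt0 N_gt0 (f_dvd t).
have logf_le q t : logn q (f t) <= logn q N by apply: dvdn_leq_log.
pose g t : {ffun 'I_m -> 'I_E.+1} := [ffun i => inord (logn (p i) (f t))].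
suff g_inj : injective g.
  by have := @leq_card _ _ g g_inj; rewrite card_ffun !card_ord.
move=> t u eq_g; apply: f_inj; apply: eqn_from_log => // q.
case: (pickP (fun i => q == p i)) => [i /eqP -> | not_p].
  have := congr1 (fun h : {ffun 'I_m -> 'I_E.+1} => val (h i)) eq_g.
  by rewrite !ffunE /= !inordK // ltnS; apply: leq_trans (logf_le _ _) (logN_le _).
have logq0 : logn q N = 0 by apply: support => i; rewrite not_p.
by have := logf_le q t; have := logf_le q u; rewrite logq0; lia.
Qed.

(* A divisor k > 1 of N is at least one of the p_i (its least prime factor). *)
Lemma divisor_ge_support_prime k : 1 < k -> k %| N -> exists i, p i <= k.
Proof.
move=> k_gt1 k_dvd; have [q q_pr q_dvd] := pdivP k_gt1.
have logq_gt0 : 0 < logn q N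
  by rewrite logn_gt0 mem_primes q_pr N_gt0 (dvdn_trans q_dvd k_dvd).
case: (pickP (fun i => q == p i)) => [i /eqP eq_q | not_p].
  by exists i; rewrite -eq_q; apply: dvdn_leq (ltnW k_gt1) q_dvd.
by move: logq_gt0; rewrite support // => i; rewrite not_p.
Qed.

End PrimeSupport.

Theorem mainTheorem6 (m : nat) (s : 'I_m -> nat) :
  0 < m -> (forall i, 0 < s i) ->
  exists c : nat, forall (p : 'I_m -> nat) (n : nat),
    (forall i, prime (p i)) ->
    (forall i j : 'I_m, (i < j)%N -> p i < p j) ->
    (forall i : 'I_m, c < p i) ->
    n = \prod_(i < m) p i ^ s i ->
    ~ has_perfect_mondrian n.
Proof.
move=> _ _; pose T := \sum_(i < m) s i.
exists ((2 * T).+1 ^ m) => p n p_pr _ p_big def_n [k [R perfectR]].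
have logn_n q : logn q n = \sum_(i < m) s i * (q == p i)
  by rewrite def_n; case: (logn_prod_pow s q p_pr).
have n_gt0 : 0 < n by rewrite def_n; case: (logn_prod_pow s 0 p_pr).
have nn_gt0 : 0 < n * n by rewrite muln_gt0 n_gt0.
have logn_nn q : logn q (n * n) = logn q n + logn q n by rewrite lognM.
have logn_le q : logn q (n * n) <= 2 * T.
  suff : logn q n <= T by rewrite logn_nn; lia.
  by rewrite logn_n leq_sum // => i _; case: (q == p i); rewrite ?muln1 ?muln0.
have support q : (forall i, q != p i) -> logn q (n * n) = 0.
  move=> not_p; rewrite logn_nn logn_n big1 // => i _.
  by rewrite (negbTE (not_p i)) muln0.
have [k_dvd w_dvd] := perfect_divides_square perfectR.
have k_le := distinct_divisors_bound nn_gt0 logn_le support (perfect_widths_inj perfectR) w_dvd.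
have [k_ge2 _] := perfectR.1.
have [i p_le] := divisor_ge_support_prime nn_gt0 support k_ge2 k_dvd.
by have := p_big i; lia.
Qed.
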